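(* Let $a,b$ be positive integers with $a\equiv 0\pmod b$, let $n\geq 1$, and let $G$ be a regular graph. If $aG\circ nK_1$ is distance magic, then $bG\circ \frac{a}{b}(nK_1)$ is distance magic.
   Context: A graph $G$ on $v$ vertices is distance magic if there is a bijection $f:V(G)\to\{1,\ldots,v\}$ and a constant $k$ such that for every vertex $x$, $\sum_{y\in N(x)}f(y)=k$, where $N(x)$ is the set of neighbours of $x$. For a positive integer $c$, $cH$ denotes the disjoint union of $c$ copies of $H$; $nK_1$ is the edgeless graph on $n$ vertices (so $\frac{a}{b}(nK_1)$ is the edgeless graph on $\frac{an}{b}$ vertices). The lexicographic product $G\circ H$ has vertex set $V(G)\times V(H)$, with $(g,h)$ adjacent to $(g',h')$ iff either $gg'\in E(G)$, or $g=g'$ and $hh'\in E(H)$. *)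

From mathcomp Require Import all_boot.
Unset Printing Implicit Defensive.

Definition simple_graph {T : finType} (adj : rel T) : Prop :=
  symmetric adj /\ irreflexive adj.

Definition regular {T : finType} (adj : rel T) : Prop :=
  exists r : nat, forall x : T, #|[set y | adj x y]| = r.

Definition dunion (c : nat) {T : finType} (adj : rel T) : rel ('I_c * T) :=
  fun u v => (u.1 == v.1) && adj u.2 v.2.

Definition edgeless (n : nat) : rel 'I_n := fun _ _ => false.

Definition lexprod {TG TH : finType} (adjG : rel TG) (adjH : rel TH)
  : rel (TG * TH) :=
  fun u v => adjG u.1 v.1 || ((u.1 == v.1) && adjH u.2 v.2).

(* distance magic: a bijection V -> {1..v} (here x |-> (f x).+1 with
   f : V -> 'I_v bijective) with constant neighbourhood sums *)
Definition distance_magic {T : finType} (adj : rel T) : Prop :=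
  exists f : T -> 'I_#|T|, bijective f /\
    exists k : nat, forall x : T, \sum_(y | adj x y) (nat_of_ord (f y)).+1 = k.

From mathcomp Require Import all_boot.

(* The vertices of [aG o nK_1] are relabelled as vertices of
   [bG o (a/b)(nK_1)] by grouping the [a] copies of [G] into [b] blocks of
   [c = a/b] copies and merging each block, together with its [n]-vertex
   fibres, into one copy with [c n]-vertex fibres.  A neighbourhood in the new
   graph is then the disjoint union of [c] neighbourhoods of the old one, one
   for each copy in the block, so the old magic labelling has the constant
   neighbourhood sum [c k]. *)

Lemma cast_ord_bij (m n : nat) (eq_mn : m = n) : bijective (cast_ord eq_mn).
Proof. by exists (cast_ord (esym eq_mn)) => i; rewrite ?cast_ordK ?cast_ordKV. Qed.

Lemma eq_card_bij (A B : finType) : #|A| = #|B| -> exists h : A -> B, bijective h.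
Proof.
move=> eqAB; exists (enum_val \o cast_ord eqAB \o enum_rank).
apply: bij_comp; last exact: enum_rank_bij.
apply: bij_comp; last exact: cast_ord_bij.
exact: enum_val_bij.
Qed.

(* With the labels transported along [h], the neighbourhood sum of [y] splits
   along the fibres of [p] into the [c] neighbourhood sums of the [w y r]. *)
Lemma distance_magic_fibred (T1 T2 : finType) (adj1 : rel T1) (adj2 : rel T2)
    (c : nat) (h : T1 -> T2) (p : T1 -> 'I_c) (w : T2 -> 'I_c -> T1) :
  bijective h ->
  (forall y r x, adj1 (w y r) x = adj2 y (h x) && (p x == r)) ->
  distance_magic adj1 -> distance_magic adj2.
Proof.
move=> [hi hK hiK] fibre [f [f_bij [k magic]]].
have h_bij : bijective h by exists hi.
have eqT : #|T1| = #|T2| by apply: bij_eq_card h_bij.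
exists (cast_ord eqT \o f \o hi); split.
  apply: bij_comp; last by exists h.
  by apply: bij_comp f_bij; apply: cast_ord_bij.
exists (c * k) => y /=.
rewrite (reindex h) /=; last exact: onW_bij.
under eq_bigr do rewrite hK.
rewrite (partition_big p predT) //= -[c in c * k]card_ord -sum_nat_const.
apply: eq_bigr => r _; rewrite -(magic (w y r)).
by apply: eq_bigl => x; rewrite fibre.
Qed.

Lemma lexprod_dunion_edgeless (c n : nat) (T : finType) (adj : rel T) u v :
  lexprod (dunion c adj) (edgeless n) u v = (u.1.1 == v.1.1) && adj u.1.2 v.1.2.
Proof. by rewrite /lexprod /dunion /edgeless andbF orbF. Qed.

Lemma distance_magic_regroup (a b c n m : nat) (T : finType) (adj : rel T)
    (e1 : 'I_a -> 'I_b * 'I_c) (e2 : 'I_c * 'I_n -> 'I_m) :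
  0 < n -> bijective e1 -> bijective e2 ->
  distance_magic (lexprod (dunion a adj) (edgeless n)) ->
  distance_magic (lexprod (dunion b adj) (edgeless m)).
Proof.
move=> n_gt0 [e1i e1K e1iK] [e2i e2K e2iK].
pose h (x : ('I_a * T) * 'I_n) : ('I_b * T) * 'I_m :=
  (((e1 x.1.1).1, x.1.2), e2 ((e1 x.1.1).2, x.2)).
pose hi (y : ('I_b * T) * 'I_m) : ('I_a * T) * 'I_n :=
  ((e1i (y.1.1, (e2i y.2).1), y.1.2), (e2i y.2).2).
pose w (y : ('I_b * T) * 'I_m) (r : 'I_c) : ('I_a * T) * 'I_n :=
  ((e1i (y.1.1, r), y.1.2), Ordinal n_gt0).
apply: (@distance_magic_fibred _ _ _ _ c h (fun x => (e1 x.1.1).2) w).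
  exists hi => [[[i t] j] | [[i t] j]].
  - by rewrite /h /hi /= e2K /= -surjective_pairing e1K.
  - by rewrite /hi /h /= e1iK /= -surjective_pairing e2iK.
move=> [[i t] j] r [[i' t'] j'].
rewrite !lexprod_dunion_edgeless /= andbAC; congr (_ && _).
have -> : (e1i (i, r) == i') = ((i, r) == e1 i').
  by apply/eqP/eqP => [<-|->]; rewrite ?e1iK ?e1K.
by case: (e1 i') => u v; rewrite xpair_eqE (eq_sym v).
Qed.

Theorem theorem15 (a b n : nat) (T : finType) (adj : rel T) :
  0 < a -> 0 < b -> b %| a -> 1 <= n ->
  simple_graph adj -> regular adj ->
  distance_magic (lexprod (dunion a adj) (edgeless n)) ->
  distance_magic (lexprod (dunion b adj) (edgeless ((a %/ b) * n))).
Proof.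
move=> _ _ dvd_ba n_gt0 _ _.
have [e1 e1_bij] : exists e : 'I_a -> 'I_b * 'I_(a %/ b), bijective e.
  by apply: eq_card_bij; rewrite card_prod !card_ord mulnC divnK.
have [e2 e2_bij] : exists e : 'I_(a %/ b) * 'I_n -> 'I_(a %/ b * n), bijective e.
  by apply: eq_card_bij; rewrite card_prod !card_ord.
exact: distance_magic_regroup n_gt0 e1_bij e2_bij.
Qed.
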